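(* Let $\mathcal{P}$ denote the family of pdCGs with vertex set $V$. The map sending a pdCG $\mathcal{G}=(\mathcal{V},\mathcal{E})$ to the quadruplet $(V,E,\mathbb{L},\mathbb{E})$, where $E$ is the union of the edge colour classes of $\mathcal{G}$, $\mathbb{L}=\{i\in L\mid \{i\}\in\mathcal{V}\}$ and $\mathbb{E}=\{(i,j)\in E_L\cap\tau(E_R)\mid \{(i,j)\}\in\mathcal{E}\}$ (with $E_L=E\cap F_L$, $E_R=E\cap F_R$), is a one-to-one correspondence between $\mathcal{P}$ and the collection of quadruplets $(V,E,\mathbb{L},\mathbb{E})$ that are compatible with $(L,R)$.
   Context: Let $V=\{1,\dots,p\}$ and let $\tau:V\to V$ be a twin-pairing function: $\tau(i)=j$ implies $\tau(j)=i$, and there is a partition $V=L\cup R$, $L\cap R=\emptyset$, with $\tau(L)=R$. The vertices are numbered so that $L=\{1,\dots,q\}$ and $R=\{q+1,\dots,p\}$. Let $F_V=\{(i,j)\mid i,j\in V,\ i<j\}$. Extend $\tau$ to edges by $\tau(i,j)=(\tau(i),\tau(j))$, with endpoints reordered if necessary so that it lies in $F_V$, and to sets elementwise. Define $F_L=\{(i,j)\in F_V\mid i<\tau(j)\}$ and $F_R=\{(i,j)\in F_V\mid i>\tau(j)\}$. A coloured graph with vertex set $V$ is a pair $(\mathcal{V},\mathcal{E})$ where $\mathcal{V}$ is a partition of $V$ and $\mathcal{E}$ is a partition of an edge set $E\subseteq F_V$. A colour class is atomic if it has one element, and twin-pairing if it is $\{i,\tau(i)\}$ or $\{(i,j),\tau(i,j)\}$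 with $(i,j)\neq\tau(i,j)$. A pdCG is a coloured graph all of whose colour classes are atomic or twin-pairing. For an undirected graph $(V,E)$ with $E\subseteq F_V$, a quadruplet $(V,E,\mathbb{L},\mathbb{E})$ is compatible with $(L,R)$ if $\mathbb{L}\subseteq L$ and $\mathbb{E}\subseteq E_L\cap\tau(E_R)$, where $E_L=E\cap F_L$, $E_R=E\cap F_R$. *)

(* Vertices V = {1,..,p} are represented by 'I_p = {0,..,p-1}
   (shift by one); L = {0,..,q-1}, R = {q,..,p-1}. *)
From mathcomp Require Import all_boot.
Set Implicit Arguments. Unset Strict Implicit. Unset Printing Implicit Defensive.

Section PdCG.
Variables (p q : nat) (tau : 'I_p -> 'I_p).

Definition vtx := 'I_p.
Definition edge := ('I_p * 'I_p)%type.

Definition Lset : {set vtx} := [set i : vtx | i < q].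
Definition Rset : {set vtx} := [set i : vtx | q <= i].

Definition FV : {set edge} := [set e : edge | e.1 < e.2].

Definition tauE (e : edge) : edge :=
  if tau e.1 < tau e.2 then (tau e.1, tau e.2) else (tau e.2, tau e.1).
Definition tauEs (A : {set edge}) : {set edge} := tauE @: A.

Definition FL : {set edge} := [set e in FV | e.1 < tau e.2].
Definition FR : {set edge} := [set e in FV | tau e.2 < e.1].

Definition EL (E : {set edge}) : {set edge} := E :&: FL.
Definition ER (E : {set edge}) : {set edge} := E :&: FR.

(* a coloured graph: (vertex partition, partition of an edge set E ⊆ F_V);
   the edge set E is the union (cover) of the edge colour classes *)
Definition cgraph := ({set {set vtx}} * {set {set edge}})%type.

Definition coloured_graph (G : cgraph) : Prop :=
  [/\ partition G.1 [set: vtx], cover G.2 \subset FV & partition G.2 (cover G.2)].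

Definition pdCG (G : cgraph) : Prop :=
  [/\ coloured_graph G,
      (forall C, C \in G.1 ->
         (exists i, C = [set i]) \/ (exists i, C = [set i; tau i]))
    & (forall C, C \in G.2 ->
         (exists e, C = [set e]) \/ (exists e, e != tauE e /\ C = [set e; tauE e]))].

(* quadruplet (V, E, LL, EE); V is always the fixed vertex set, so only
   (E, LL, EE) is recorded *)
Definition quad := ({set edge} * {set vtx} * {set edge})%type.

Definition compatible (Q : quad) : Prop :=
  [/\ Q.1.1 \subset FV, Q.1.2 \subset Lset & Q.2 \subset EL Q.1.1 :&: tauEs (ER Q.1.1)].

Definition quad_of (G : cgraph) : quad :=
  let E := cover G.2 in
  (E, [set i in Lset | [set i] \in G.1],
      [set e in EL E :&: tauEs (ER E) | [set e] \in G.2]).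

End PdCG.

From mathcomp Require Import all_boot zify.
Set Implicit Arguments. Unset Strict Implicit. Unset Printing Implicit Defensive.

(* For an involution f, a partition of X into blocks {x} and {x, f x} is
   determined by its set S of singleton blocks, and every S whose complement
   is f-stable and free of f-fixed points arises.  On vertices (f = tau, which
   swaps L and R) the singletons form a tau-stable set, determined by its
   trace LL on L.  On edges (f = tauE) a pair block {z, tauE z} needs both
   edges in E and z not fixed, and then one of them lies in
   E_L :&: tauE(E_R) while its twin lies in E_R; so z is a singleton iff z or
   its twin is in EE, or the twin is not in E, or z is fixed
   ([edge_singleton]). *)

Section PairPartition.
Variables (T : finType) (f : T -> T) (X : {set T}).
Hypothesis fK : {in X, involutive f}.

Definition pair_blocks (P : {set {set T}}) : Prop :=
  forall C, C \in P -> (exists x, C = [set x]) \/ (exists x, C = [set x; f x]).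

Section PairBlocks.
Variable P : {set {set T}}.
Hypotheses (partP : partition P X) (pairP : pair_blocks P).

Lemma pblock_pair z : z \in X ->
  pblock P z = if [set z] \in P then [set z] else [set z; f z].
Proof.
move=> zX; have zP : z \in cover P by rewrite (cover_partition partP).
case: ifP => [zP1|zNP1].
  exact: def_pblock (partition_trivIset partP) zP1 (set11 z).
have AP := pblock_mem zP; have zA : z \in pblock P z by rewrite mem_pblock.
have [[x defA]|[x defA]] := pairP AP; rewrite defA in AP zA *.
  by move: zA; rewrite inE => /eqP zx; rewrite -zx zNP1 in AP.
have xX : x \in X by apply: (subsetP (partitionS partP AP)); rewrite set21.
by case/set2P: zA => ->; rewrite ?fK // setUC.
Qed.

Lemma pair_singleton_f x : x \in X -> f x \in X ->
  ([set f x] \in P) = ([set x] \in P).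
Proof.
have tiP := partition_trivIset partP.
suff closed y : y \in X -> f y \in X -> [set y] \in P -> [set f y] \in P.
  move=> xX fxX; apply/idP/idP; last exact: closed.
  by move/(closed _ fxX); rewrite fK //; apply.
move=> yX fyX yP; apply: contraT => fyP.
have pb : pblock P (f y) = [set f y; y].
  by rewrite pblock_pair // (negbTE fyP) fK.
have : pblock P y = pblock P (f y).
  by apply: same_pblock tiP _; rewrite pb set22.
rewrite pb (def_pblock tiP yP (set11 y)) => /setP/(_ (f y)).
by rewrite !inE eqxx => /eqP fy; rewrite fy yP in fyP.
Qed.

Lemma pair_not_singleton x : x \in X -> [set x] \notin P ->
  f x \in X /\ f x != x.
Proof.
move=> xX xP; have := @pblock_mem _ P x; rewrite (cover_partition partP).
move=> /(_ xX); rewrite pblock_pair // (negbTE xP) => pairX; split.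
  by apply: (subsetP (partitionS partP pairX)); rewrite set22.
by apply: contraNneq xP => fx; rewrite fx setUid in pairX.
Qed.

End PairBlocks.

Lemma pair_partition_eq P Q : partition P X -> partition Q X ->
  pair_blocks P -> pair_blocks Q ->
  {in X, forall z, ([set z] \in P) = ([set z] \in Q)} -> P = Q.
Proof.
move=> partP partQ pairP pairQ PQ.
rewrite -(preim_partition_pblock partP) -(preim_partition_pblock partQ).
apply: eq_in_imset => x xX; apply/setP => y; rewrite !inE.
by case: (boolP (y \in X)) => //= yX; rewrite !pblock_pair // !PQ.
Qed.

Section Pairing.
Variable S : {set T}.
Hypotheses (sSX : S \subset X)
  (pairS : {in X :\: S, forall x, [/\ f x \in X, f x \notin S & f x != x]}).

Definition pairing : {set {set T}} :=
  [set [set x] | x in S] :|: [set [set x; f x] | x in X :\: S].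

Lemma pairing_block A z : A \in pairing -> z \in A ->
  A = if z \in S then [set z] else [set z; f z].
Proof.
case/setUP => /imsetP[x xS ->]; first by rewrite inE => /eqP ->; rewrite xS.
have [fxX fxS _] := pairS xS; move: xS; rewrite inE => /andP[xS xX].
by case/set2P => ->; rewrite ?(negbTE xS) ?(negbTE fxS) ?fK // setUC.
Qed.

Lemma pairing_partition : partition pairing X.
Proof.
apply/and3P; split.
- apply/eqP/setP => z; apply/bigcupP/idP => [[A AP zA]|zX].
    case/setUP: AP => /imsetP[x xS defA]; move: zA; rewrite defA.
      by rewrite inE => /eqP ->; apply: (subsetP sSX).
    have [fxX _ _] := pairS xS; move: xS; rewrite inE => /andP[_ xX].
    by case/set2P => ->.
  case zS: (z \in S).
    by exists [set z]; rewrite ?set11 //; apply/setUP; left; rewrite imset_f.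
  exists [set z; f z]; rewrite ?set21 //.
  by apply/setUP; right; apply/imsetP; exists z; rewrite // inE zS.
- apply/trivIsetP => A B AP BP; apply: contraNT; rewrite -setI_eq0.
  case/set0Pn => z; rewrite inE => /andP[zA zB].
  by rewrite (pairing_block AP zA) (pairing_block BP zB).
- by apply/negP; case/setUP => /imsetP[x _ /esym/setP/(_ x)]; rewrite !inE eqxx.
Qed.

Lemma pairing_blocks C : C \in pairing ->
  (exists x, C = [set x]) \/ (exists x, x != f x /\ C = [set x; f x]).
Proof.
case/setUP => /imsetP[x xS ->]; first by left; exists x.
by have [_ _ fx] := pairS xS; right; exists x; rewrite eq_sym.
Qed.

Lemma pairing_singleton x : x \in X -> ([set x] \in pairing) = (x \in S).
Proof.
move=> xX; apply/idP/idP => [xP|xS]; last by apply/setUP; left; apply: imset_f.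
apply: contraT => xS.
have [_ _ /negP[]] : [/\ f x \in X, f x \notin S & f x != x].
  by apply: pairS; rewrite inE xS.
have := pairing_block xP (set11 x); rewrite (negbTE xS) => /setP/(_ (f x)).
by rewrite !inE eqxx orbT => ->.
Qed.

End Pairing.
End PairPartition.

Section TwinPairing.
Variables (p q : nat) (tau : 'I_p -> 'I_p).
Hypotheses (tauK : involutive tau) (tauL : tau @: Lset p q = Rset p q).

Lemma tau_LR (i : 'I_p) : (i < q) = (q <= tau i).
Proof.
apply/idP/idP => iq.
  have : tau i \in Rset p q by rewrite -tauL imset_f ?inE.
  by rewrite inE.
have : tau i \in tau @: Lset p q by rewrite tauL inE.
by case/imsetP => j; rewrite inE => jq /(inv_inj tauK) ->.
Qed.

Lemma tau_neq (i : 'I_p) : tau i != i.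
Proof. by apply/eqP => tii; have := tau_LR i; rewrite tii; case: ltnP. Qed.

Lemma tauE_FV e : e \in FV p -> tauE tau e \in FV p.
Proof.
case: e => a b; rewrite /tauE !inE /= => ab; case: ifP => //= /negbT.
rewrite -leqNgt leq_eqVlt => /orP[/eqP/val_inj/(inv_inj tauK) ba|//].
by rewrite ba ltnn in ab.
Qed.

Lemma tauEK : {in FV p, involutive (tauE tau)}.
Proof.
case=> a b; rewrite /tauE !inE /= => ab.
case: (ifP (tau a < tau b)) => tab /=; rewrite !tauK ?ab //.
by rewrite ltnNge ltnW.
Qed.

Lemma tauE_FL e : e \in FL tau -> tauE tau e \in FR tau.
Proof.
case: e => a b; rewrite /tauE !inE /= => /andP[ab atb].
have : val (tau a) != val (tau b).
  by rewrite val_eqE (inj_eq (inv_inj tauK)) neq_ltn ab.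
have := tau_LR a; have := tau_LR b.
have := tau_LR (tau a); have := tau_LR (tau b); rewrite !tauK.
by case: (ltnP (tau a) (tau b)) => /= tab; rewrite ?tauK; lia.
Qed.

Lemma tauE_FR e : e \in FR tau -> tauE tau e \in FL tau.
Proof.
case: e => a b; rewrite /tauE !inE /= => /andP[ab bta].
have : val (tau a) != val (tau b).
  by rewrite val_eqE (inj_eq (inv_inj tauK)) neq_ltn ab.
have := tau_LR a; have := tau_LR b.
have := tau_LR (tau a); have := tau_LR (tau b); rewrite !tauK.
by case: (ltnP (tau a) (tau b)) => /= tab; rewrite ?tauK; lia.
Qed.

Lemma FL_notin_FR e : e \in FL tau -> e \notin FR tau.
Proof. by rewrite !inE => /andP[_ ?]; apply/negP => /andP[_ ?]; lia. Qed.

Lemma tauE_fixed e : e \in FV p -> e \notin FL tau -> e \notin FR tau ->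
  tauE tau e = e.
Proof.
case: e => a b; rewrite /tauE !inE /= => ab; rewrite ab /= -!leqNgt => h1 h2.
have a_tb : a = tau b by apply: val_inj; apply/eqP; rewrite eqn_leq h1 h2.
by rewrite a_tb tauK ltnNge ltnW // -a_tb.
Qed.

Lemma mem_EL_tauER (E : {set edge p}) z :
  z \in FV p -> z \in E -> z \in FL tau -> tauE tau z \in E ->
  z \in EL tau E :&: tauEs tau (ER tau E).
Proof.
move=> zV zE zL fE; rewrite !in_setI zE zL /=.
by apply/imsetP; exists (tauE tau z); rewrite ?tauEK // in_setI fE tauE_FL.
Qed.

Definition edge_singleton (E EE : {set edge p}) (z : edge p) : bool :=
  [|| z \in EE, tauE tau z \in EE, tauE tau z \notin E | tauE tau z == z].

Lemma edge_singleton_twin (E EE : {set edge p}) z :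
  EE \subset EL tau E :&: tauEs tau (ER tau E) ->
  z \in EL tau E :&: tauEs tau (ER tau E) -> edge_singleton E EE z = (z \in EE).
Proof.
move=> EEtwin /setIP[/setIP[zE zL] /imsetP[g /setIP[gE gR] zg]].
rewrite /edge_singleton; apply/idP/idP => [|->//].
case/or4P => [//|/(subsetP EEtwin)|fNE|/eqP fz].
- by case/setIP => /setIP[_ /FL_notin_FR]; rewrite tauE_FL.
- have gV : g \in FV p by move: gR; rewrite inE => /andP[].
  by move: fNE; rewrite zg tauEK // gE.
- by have := FL_notin_FR zL; rewrite -fz tauE_FL.
Qed.

Section OfPdCG.
Variable G : cgraph p.
Hypothesis pdG : pdCG tau G.

Lemma pdCG_vertex_partition : partition G.1 [set: vtx p].
Proof. by case: pdG => -[]. Qed.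

Lemma pdCG_pair_vertices : pair_blocks tau G.1.
Proof. by case: pdG. Qed.

Lemma pdCG_edge_partition : partition G.2 (cover G.2).
Proof. by case: pdG => -[]. Qed.

Let cover_FV : cover G.2 \subset FV p. Proof. by case: pdG => -[]. Qed.

Lemma pdCG_pair_edges : pair_blocks (tauE tau) G.2.
Proof.
by case: pdG => _ _ pairE C /pairE[|[e [_ ->]]]; [left | right; exists e].
Qed.

Lemma pdCG_tauEK : {in cover G.2, involutive (tauE tau)}.
Proof. by apply: sub_in1 tauEK; apply/subsetP. Qed.

Lemma pdCG_vertex_singleton (i : vtx p) : ([set i] \in G.1) =
  ((if i < q then i else tau i) \in (quad_of q tau G).1.2).
Proof.
rewrite !inE; case: ifP => [-> //|iq]; rewrite tau_LR tauK leqNgt iq /=.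
by rewrite (pair_singleton_f (in1W tauK) pdCG_vertex_partition) ?inE //;
  apply: pdCG_pair_vertices.
Qed.

Lemma pdCG_edge_singleton z : z \in cover G.2 ->
  ([set z] \in G.2) = edge_singleton (cover G.2) (quad_of q tau G).2 z.
Proof.
move=> zE; pose E := cover G.2.
have memEE e : (e \in (quad_of q tau G).2) =
    (e \in EL tau E :&: tauEs tau (ER tau E)) && ([set e] \in G.2).
  by rewrite !inE.
rewrite /edge_singleton !memEE.
have zV : z \in FV p by apply: (subsetP cover_FV).
have singleton_twin :=
  pair_singleton_f pdCG_tauEK pdCG_edge_partition pdCG_pair_edges zE.
have not_singleton :=
  pair_not_singleton pdCG_tauEK pdCG_edge_partition pdCG_pair_edges zE.
apply/idP/idP => [zP|].
  have [fE|fNE] := boolP (tauE tau z \in E); last by rewrite !orbT.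
  have [zL|zNL] := boolP (z \in FL tau); first by rewrite mem_EL_tauER ?zP.
  have [zR|zNR] := boolP (z \in FR tau); last by rewrite tauE_fixed ?eqxx ?orbT.
  apply/or4P/Or42; rewrite singleton_twin //.
  by rewrite (mem_EL_tauER (z := tauE tau z)) ?tauE_FV ?tauE_FR ?tauEK.
case/or4P => [/andP[] // | /andP[/setIP[/setIP[fE _] _]] | fNE | /eqP fz].
- by rewrite singleton_twin.
- by apply: contraT => /not_singleton[]; rewrite (negbTE fNE).
- by apply: contraT => /not_singleton[_]; rewrite fz eqxx.
Qed.

End OfPdCG.

Lemma quad_of_compatible G : pdCG tau G -> compatible q tau (quad_of q tau G).
Proof.
case=> -[_ cV _] _ _; split=> //; apply/subsetP => x.
  by rewrite inE => /andP[].
by rewrite inE => /andP[].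
Qed.

Lemma quad_of_inj G1 G2 : pdCG tau G1 -> pdCG tau G2 ->
  quad_of q tau G1 = quad_of q tau G2 -> G1 = G2.
Proof.
move=> pdG1 pdG2 eqQ; have eqE : cover G1.2 = cover G2.2 by case: eqQ.
have eqV : G1.1 = G2.1.
  apply: (pair_partition_eq (in1W tauK)
    (pdCG_vertex_partition pdG1) (pdCG_vertex_partition pdG2)
    (pdCG_pair_vertices pdG1) (pdCG_pair_vertices pdG2)) => i _.
  by rewrite (pdCG_vertex_singleton pdG1) (pdCG_vertex_singleton pdG2) eqQ.
have eqE2 : G1.2 = G2.2.
  apply: (pair_partition_eq (pdCG_tauEK pdG1) (pdCG_edge_partition pdG1) _
    (pdCG_pair_edges pdG1) (pdCG_pair_edges pdG2)) => [|z zE].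
    by rewrite eqE pdCG_edge_partition.
  rewrite (pdCG_edge_singleton pdG1 zE) (pdCG_edge_singleton pdG2) -?eqE //.
  by rewrite eqQ.
by case: G1 G2 {pdG1 pdG2 eqQ eqE} eqV eqE2 => [? ?] [? ?] /= -> ->.
Qed.

Lemma quad_of_surj Q : compatible q tau Q ->
  exists2 G : cgraph p, pdCG tau G & quad_of q tau G = Q.
Proof.
case: Q => [[E LL] EE] [/= EV LLL EEtwin].
pose SV := [set i | (i \in LL) || (tau i \in LL)].
pose SE := [set e in E | edge_singleton E EE e].
have tauEK_E : {in E, involutive (tauE tau)}.
  by apply: sub_in1 tauEK; apply/subsetP.
have pairSV : {in [set: vtx p] :\: SV,
    forall i, [/\ tau i \in [set: vtx p], tau i \notin SV & tau i != i]}.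
  by move=> i; rewrite !inE tauK orbC tau_neq => /andP[].
have pairSE : {in E :\: SE,
    forall e, [/\ tauE tau e \in E, tauE tau e \notin SE & tauE tau e != e]}.
  move=> e; rewrite !inE /edge_singleton => /andP[+ eE].
  rewrite eE /= !negb_or negbK.
  case/and4P=> eNEE fNEE fE fNe; split=> //.
  by rewrite tauEK_E // fE eE (negbTE eNEE) (negbTE fNEE) eq_sym (negbTE fNe).
have SE_E : SE \subset E by apply/subsetP => e; rewrite inE => /andP[].
have partE := pairing_partition tauEK_E SE_E pairSE.
have coverE := cover_partition partE.
exists (pairing tau [set: vtx p] SV, pairing (tauE tau) E SE).
  split; first split.
  - exact: (pairing_partition (in1W tauK) (subsetT SV) pairSV).
  - by rewrite coverE.
  - by rewrite coverE.
  - by move=> C /(pairing_blocks pairSV)[|[i [_ ->]]]; [left | right; exists i].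
  - exact: (pairing_blocks pairSE).
rewrite /quad_of /= coverE; congr (_, _, _).
  apply/setP => i; rewrite inE (pairing_singleton (in1W tauK) pairSV) ?inE //.
  case: (boolP (i \in LL)) => [/(subsetP LLL)|_]; first by rewrite inE => ->.
  by apply/negP => /andP[+ /(subsetP LLL)]; rewrite !inE tau_LR; lia.
apply/setP => e; rewrite inE.
have [etwin|eNtwin] := boolP (e \in EL tau E :&: tauEs tau (ER tau E)).
  have eE : e \in E by move: etwin => /setIP[/setIP[]].
  by rewrite /= (pairing_singleton tauEK_E pairSE) // inE eE edge_singleton_twin.
by apply/esym/negP => /(subsetP EEtwin); rewrite (negbTE eNtwin).
Qed.

End TwinPairing.

Theorem theorem4 (p q : nat) (tau : 'I_p -> 'I_p)
  (Hinv : forall i, tau (tau i) = i)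
  (Hqp : q <= p)
  (HLR : tau @: Lset p q = Rset p q) :
  (forall G : cgraph p, pdCG tau G -> compatible q tau (quad_of q tau G)) /\
  (forall G1 G2 : cgraph p, pdCG tau G1 -> pdCG tau G2 ->
     quad_of q tau G1 = quad_of q tau G2 -> G1 = G2) /\
  (forall Q : quad p, compatible q tau Q ->
     exists2 G : cgraph p, pdCG tau G & quad_of q tau G = Q).
Proof.
split; first exact: quad_of_compatible.
split; first exact: quad_of_inj Hinv HLR.
exact: quad_of_surj Hinv HLR.
Qed.
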